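(* Let $k$ be a positive integer and $n_0,\ldots,n_{k-1}$ positive integers, with indices read modulo $k$. For each $j\in\{0,\ldots,k-1\}$ let $A^{(j)}$ be a real $n_j\times n_{j+1}$ matrix. Suppose that every edge of the signed digraph $G=G_{A^{(0)}A^{(1)}\cdots A^{(k-1)}}$ lies on a single e-cycle $C$ of length $kr$ (for some positive integer $r$), i.e. the edge set of $G$ is exactly the edge set of $C$. Then $A=A^{(0)}A^{(1)}\cdots A^{(k-1)}$ is not a $P_0$-matrix.
   Context: Indices $j$ are taken modulo $k$. The signed digraph $G=G_{A^{(0)}\cdots A^{(k-1)}}$ has vertex set the disjoint union of $V_0,\ldots,V_{k-1}$ with $V_j=\{V_j^1,\ldots,V_j^{n_j}\}$; there is a directed edge from $V_j^r$ to $V_{j+1}^s$ iff $(A^{(j)})_{rs}\neq 0$, with the sign of $(A^{(j)})_{rs}$; no other edges (loops allowed when $k=1$). A cycle means a directed cycle (no repeated vertices); every cycle has length a multiple of $k$. A cycle with $kr_1$ edges, $r_2$ of them negative, is an e-cycle if $(-1)^{r_1+r_2}=1$ and an o-cycle otherwise. A $P_0$-matrix is a real square matrix all of whose principal minors are nonnegative. *)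

From HB Require Import structures.
From mathcomp Require Import all_boot all_order all_algebra.
From mathcomp Require Import reals.
Set Implicit Arguments. Unset Strict Implicit. Unset Printing Implicit Defensive.
Import Order.TTheory GRing.Theory Num.Theory.
Local Open Scope ring_scope.

Lemma iter_ordS_val (k : nat) (j0 : 'I_k) (m : nat) :
  val (iter m (@ordS k) j0) = ((val j0 + m) %% k)%N.
Proof.
elim: m => [|m IH] /=; first by rewrite addn0 modn_small.
by rewrite IH addnS -addn1 modnDml addn1.
Qed.

Lemma iter_ordS_k (k : nat) (j0 : 'I_k) : val j0 = 0%N -> iter k (@ordS k) j0 = j0.
Proof.
move=> h0; apply: val_inj; rewrite iter_ordS_val /=.
by move: h0 => /= ->; rewrite add0n modnn.
Qed.

Section Chain.
Variables (R : realType) (k : nat) (hk : (0 < k)%N) (n : 'I_k -> nat)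
  (A : forall j : 'I_k, 'M[R]_(n j, n (ordS j))).

Definition j0 : 'I_k := Ordinal hk.

Fixpoint prodA (m : nat) : 'M[R]_(n j0, n (iter m (@ordS k) j0)) :=
  match m as m0 return 'M[R]_(n j0, n (iter m0 (@ordS k) j0)) with
  | 0 => 1%:M
  | m'.+1 => prodA m' *m A (iter m' (@ordS k) j0)
  end.

Definition chain_prod : 'M[R]_(n j0) :=
  castmx (erefl, congr1 n (iter_ordS_k (erefl : val j0 = 0%N))) (prodA k).

(* Vertices of G: V_j^r, encoded as the dependent pair (j, r). *)
Definition vertex := {j : 'I_k & 'I_(n j)}.

(* weight of the potential edge u -> v: the entry (A^(j))_{rs} if
   u = V_j^r and v = V_{j+1}^s, and 0 otherwise (no other edges). *)
Definition ew (u v : vertex) : R :=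
  match tag v =P ordS (tag u) with
  | ReflectT e => A (tag u) (tagged u) (cast_ord (congr1 n e) (tagged v))
  | ReflectF _ => 0
  end.

(* directed edge u -> v of G (its sign is the sign of ew u v) *)
Definition is_edge (u v : vertex) : bool := ew u v != 0.

(* a directed cycle: nonempty sequence of distinct vertices
   c = [v_0; ...; v_{m-1}] with edges v_i -> v_{i+1} (indices mod m);
   its edges are the pairs (u, next c u) for u in c. *)
Definition is_dcycle (c : seq vertex) : bool :=
  [&& c != [::], uniq c & cycle is_edge c].

Definition neg_edges (c : seq vertex) : nat :=
  count (fun u => ew u (next c u) < 0) c.

(* e-cycle: cycle with k r_1 edges, r_2 negative, (-1)^(r_1+r_2) = 1 *)
Definition e_cycle (c : seq vertex) : bool :=
  is_dcycle c && ~~ odd (size c %/ k + neg_edges c).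

End Chain.

Definition principal_submx (R : pzRingType) (m : nat) (S : {set 'I_m})
    (M : 'M[R]_m) : 'M[R]_#|S| :=
  \matrix_(i, j) M (enum_val i) (enum_val j).

Definition P0_matrix (R : realType) (m : nat) (M : 'M[R]_m) : Prop :=
  forall S : {set 'I_m}, 0 <= \det (principal_submx S M).

(* Every vertex of G has at most one outgoing edge, to its successor on C, so
   the entry (a, b) of A is the weight of the unique walk of length k leaving
   V_0^a, and vanishes unless that walk ends at V_0^b. On the r vertices of V_0
   lying on C, A is therefore a weighted permutation matrix whose permutation
   (k steps along C) is a single r-cycle; its determinant is
   (-1)^(r-1) times the product of all edge weights of C, i.e.
   -(-1)^(r + r_2) |w(C)|, which is negative for an e-cycle. *)

From HB Require Import structures.
From mathcomp Require Import all_boot all_order all_algebra.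
From mathcomp Require Import reals.
From mathcomp Require Import ring fingroup perm.
Import Order.TTheory GRing.Theory Num.Theory.
Local Open Scope ring_scope.
Set Implicit Arguments. Unset Strict Implicit. Unset Printing Implicit Defensive.

Lemma det_diag_perm (R : comPzRingType) (N : nat) (d : 'I_N -> R) (s : 'S_N) :
  \det (\matrix_(i, j) (d i * (s i == j)%:R)) = (-1) ^+ s * \prod_i d i.
Proof.
have -> : \matrix_(i, j) (d i * (s i == j)%:R) = diag_mx (\row_i d i) *m perm_mx s.
  by apply/matrixP => i j; rewrite mul_diag_mx !mxE.
by rewrite det_mulmx det_diag det_perm mulrC; under eq_bigr do rewrite mxE.
Qed.

Lemma odd_perm_transitive (T : finType) (s : {perm T}) (x0 : T) :
  (forall x y, exists q, y = (s ^+ q)%g x) -> odd_perm s = ~~ odd #|T|.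
Proof.
move=> tr; rewrite /odd_perm.
have -> : porbits s = [set porbit s x0].
  apply/setP => X; apply/imsetP/set1P => [[x _ ->]|->]; last by exists x0.
  by apply/eqP; rewrite eq_porbit_mem; apply/porbitP; apply: tr.
by rewrite cards1 addbT.
Qed.

Lemma enum_val_perm (T : finType) (S : {set T}) (g : T -> T) :
  {in S, forall a, g a \in S} -> {in S &, injective g} ->
  {s : 'S_#|S| | forall i, enum_val (s i) = g (enum_val i)}.
Proof.
move=> gS ginj.
pose s0 (i : 'I_#|S|) := enum_rank_in (enum_valP i) (g (enum_val i)).
have s0E i : enum_val (s0 i) = g (enum_val i).
  by rewrite enum_rankK_in // gS // enum_valP.
have s0inj : injective s0.
  by move=> i j e; apply/enum_val_inj/ginj; rewrite ?enum_valP // -!s0E e.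
by exists (perm s0inj) => i; rewrite permE.
Qed.

Lemma det_principal_submx_cycle (R : comPzRingType) (N : nat) (M : 'M[R]_N)
    (S : {set 'I_N}) (g : 'I_N -> 'I_N) (d : 'I_N -> R) (a0 : 'I_N) :
    a0 \in S -> {in S, forall a, g a \in S} -> {in S &, injective g} ->
    {in S &, forall a b, exists q, b = iter q g a} ->
    {in S, forall a b, M a b = d a * (g a == b)%:R} ->
  \det (principal_submx S M) = - (-1) ^+ #|S| * \prod_(a in S) d a.
Proof.
move=> a0S gS ginj gtr Mg; have [s sE] := enum_val_perm gS ginj.
have iter_s q i : enum_val ((s ^+ q)%g i) = iter q g (enum_val i).
  by elim: q => [|q IH]; rewrite ?expg0 ?perm1 // expgSr permM sE IH.
have -> : principal_submx S M = \matrix_(i, j) (d (enum_val i) * (s i == j)%:R).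
  by apply/matrixP => i j; rewrite !mxE Mg ?enum_valP // -sE (inj_eq enum_val_inj).
have S_gt0 : (0 < #|S|)%N by apply/card_gt0P; exists a0.
rewrite det_diag_perm -big_enum_val (@odd_perm_transitive _ _ (Ordinal S_gt0)).
  by rewrite card_ord signrN signr_odd.
move=> i j; have [q e] := gtr _ _ (enum_valP i) (enum_valP j).
by exists q; apply: enum_val_inj; rewrite iter_s -e.
Qed.

Lemma prodr_sign_norm (R : realDomainType) (T : eqType) (s : seq T) (G : T -> R) :
    (forall x, x \in s -> G x != 0) ->
  \prod_(x <- s) G x = (-1) ^+ count (fun x => G x < 0) s * \prod_(x <- s) `|G x|.
Proof.
elim: s => [|a s IH] G_neq0; first by rewrite !big_nil mul1r.
rewrite !big_cons /= exprD IH => [|x xs]; last by rewrite G_neq0 // inE xs orbT.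
by case: ltP => [/ltr0_norm|/ger0_norm] ->; rewrite ?expr0 ?expr1; ring.
Qed.

Local Notation vtx n j x := (@existT _ (fun i => 'I_(n i)) j x).

Lemma vtx_inj (k : nat) (n : 'I_k -> nat) (j : 'I_k) :
  injective (fun x : 'I_(n j) => vtx n j x).
Proof. exact: eq_from_Tagged. Qed.

Section Walks.
Variables (R : realType) (k : nat) (hk : (0 < k)%N) (n : 'I_k -> nat)
  (A : forall j : 'I_k, 'M[R]_(n j, n (ordS j))).
Local Notation z := (j0 hk).

Lemma ew_neq0_tag (u v : vertex n) : ew A u v != 0 -> tag v = ordS (tag u).
Proof. by rewrite /ew; case: eqP => // e; rewrite eqxx. Qed.

Lemma ew_vtx j x y : ew A (vtx n j x) (vtx n (ordS j) y) = A j x y.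
Proof.
rewrite /ew /=; case: eqP => // e.
by rewrite (eq_irrelevance e erefl) cast_ord_id.
Qed.

Lemma vtx_cast j j' (e : j = j') (p : n j = n j') y :
  vtx n j' (cast_ord p y) = vtx n j y.
Proof. by subst j'; rewrite (eq_irrelevance p erefl) cast_ord_id. Qed.

Variable f : vertex n -> vertex n.
Hypothesis ew_succ : forall u v, v != f u -> ew A u v = 0.

Definition walk_weight m u := \prod_(s < m) ew A (iter s f u) (f (iter s f u)).

Lemma ew_succE u v : ew A u v = (f u == v)%:R * ew A u (f u).
Proof.
by have [->|/ew_succ ->] := eqVneq v (f u); rewrite ?mul1r ?mul0r.
Qed.

Lemma prodA_entry m a b :
  prodA hk A m a b =
    walk_weight m (vtx n z a) * (iter m f (vtx n z a) == vtx n (iter m (@ordS k) z) b)%:R.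
Proof.
elim: m b => [|m IH] b; first by rewrite /walk_weight big_ord0 mul1r mxE eq_Tagged.
rewrite /= mxE; under eq_bigr do rewrite IH.
rewrite /walk_weight big_ord_recr /= -/(walk_weight m _) -mulrA.
set jm := iter m _ z; set W := walk_weight m _; case: (iter m f _) => j y.
have [ejm|ne] := eqVneq j jm.
  subst j; rewrite (bigD1 y) //= big1 => [|i /negbTE ne]; last first.
    by rewrite eq_Tagged /= eq_sym ne mulr0 mul0r.
  by rewrite eqxx mulr1 addr0 -ew_vtx ew_succE [X in W * X]mulrC.
rewrite big1 => [|i _]; last by rewrite -tag_eqE /tag_eq /= (negbTE ne) mulr0 mul0r.
rewrite [X in W * X]mulrC -ew_succE; apply/esym/eqP; rewrite mulf_eq0; apply/orP; right.
by apply: contraNT ne => /ew_neq0_tag /= /ordS_inj ->.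
Qed.

Lemma chain_prod_entry a b :
  chain_prod hk A a b =
    walk_weight k (vtx n z a) * (iter k f (vtx n z a) == vtx n z b)%:R.
Proof.
by rewrite castmxE prodA_entry cast_ord_id (vtx_cast (esym (iter_ordS_k _))).
Qed.

End Walks.

Lemma big_traject (R : Type) (idx : R) (op : R -> R -> R) (T : Type) (f : T -> T)
    (x : T) (m : nat) (F : T -> R) :
  \big[op/idx]_(y <- traject f x m) F y = \big[op/idx]_(i < m) F (iter i f x).
Proof.
rewrite (big_nth x) size_traject big_mkord.
by apply: eq_bigr => i _; rewrite nth_traject.
Qed.

Lemma perm_traject_next (T : finType) (c : seq T) (x : T) :
  uniq c -> x \in c -> perm_eq (traject (next c) x (size c)) c.
Proof.
move=> c_uniq xc; have c_cycle := cycle_next c_uniq.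
by rewrite -(order_cycle c_cycle c_uniq xc) -/(orbit _ x) (orbitE c_cycle) ?perm_rot.
Qed.

Lemma big_traject_blocks (R : Type) (idx : R) (op : Monoid.law idx) (T : Type)
    (f : T -> T) (x : T) (r k : nat) (F : T -> R) :
  \big[op/idx]_(y <- traject f x (r * k)%N) F y =
    \big[op/idx]_(t < r) \big[op/idx]_(s < k) F (iter s f (iter (t * k)%N f x)).
Proof.
rewrite big_traject -(big_mkord xpredT (fun i => F (iter i f x))) big_nat_mul big_mkord.
apply: eq_bigr => t _; rewrite -{1}[(t * k)%N]add0n big_addn mulSn addnK big_mkord.
by apply: eq_bigr => s _; rewrite iterD.
Qed.

Section SingleCycle.
Variables (R : realType) (k : nat) (hk : (0 < k)%N) (n : 'I_k -> nat)
  (A : forall j : 'I_k, 'M[R]_(n j, n (ordS j))) (c : seq (vertex n)).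
Hypothesis edgesE : forall u v, is_edge A u v = (u \in c) && (next c u == v).
Hypothesis c_uniq : uniq c.

Local Notation nx := (next c).
Local Notation z := (j0 hk).
Local Notation r := (size c %/ k)%N.

Lemma ew_off_next u v : v != nx u -> ew A u v = 0.
Proof.
move=> ne; have := edgesE u v.
by rewrite /is_edge [nx u == v]eq_sym (negbTE ne) andbF => /negbFE/eqP.
Qed.

Lemma ew_next_neq0 u : u \in c -> ew A u (nx u) != 0.
Proof. by move=> uc; have := edgesE u (nx u); rewrite uc eqxx. Qed.

Lemma mem_iter_next m u : (iter m nx u \in c) = (u \in c).
Proof. by elim: m => //= m <-; rewrite mem_next. Qed.

Lemma iter_next_inj m : injective (iter m nx).
Proof.
have next_inj : injective nx := can_inj (prev_next c_uniq).
by elim: m => // m IH x y /= /next_inj/IH.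
Qed.

Lemma tag_iter_next m u :
  u \in c -> val (tag (iter m nx u)) = ((val (tag u) + m) %% k)%N.
Proof.
move=> uc; rewrite -iter_ordS_val; congr val; elim: m => //= m <-.
by rewrite (ew_neq0_tag (ew_next_neq0 _)) ?mem_iter_next.
Qed.

Lemma order_next u : u \in c -> fingraph.order nx u = size c.
Proof. by move=> uc; rewrite (order_cycle (cycle_next c_uniq)). Qed.

Lemma dvdn_size u : u \in c -> (k %| size c)%N.
Proof.
move=> uc; have := tag_iter_next (size c) uc.
rewrite -{1}(order_next uc) iter_order; last exact: can_inj (prev_next c_uniq).
move=> tuE; rewrite /dvdn -[0%N](mod0n k) -(eqn_modDl (val (tag u))) addn0 -tuE.
by rewrite modn_small ?ltn_ord.
Qed.

Lemma tag_iter_level0 m u :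
  u \in c -> tag u = z -> (tag (iter m nx u) == z) = (k %| m)%N.
Proof. by move=> uc tu; rewrite -val_eqE /= tag_iter_next // tu add0n. Qed.

Lemma exists_level0 : c != [::] -> exists a : 'I_(n z), vtx n z a \in c.
Proof.
case cE: c => [|u c'] // _; rewrite -cE; have uc : u \in c by rewrite cE mem_head.
pose v := iter (k - val (tag u)) nx u.
have vc : v \in c by rewrite mem_iter_next.
have tv : tag v = z.
  by apply: val_inj; rewrite tag_iter_next // subnKC ?modnn // ltnW ?ltn_ord.
by clearbody v; case: v vc tv => j y vc /= tj; subst j; exists y.
Qed.

Lemma level0_iter u v : u \in c -> tag u = z -> v \in c -> tag v = z ->
  exists2 t, (t < r)%N & v = iter (t * k)%N nx u.
Proof.
move=> uc tu vc tv.
have uv : fconnect nx u v by rewrite (fconnect_cycle (cycle_next c_uniq) uc).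
have := findex_max uv; rewrite order_next // => m_lt.
have /dvdnP[t mE] : (k %| findex nx u v)%N.
  by rewrite -(tag_iter_level0 _ uc tu) iter_findex // tv.
exists t; last by rewrite -mE iter_findex.
by rewrite -(ltn_pmul2r hk) -mE divnK // (dvdn_size uc).
Qed.

Definition level0 := [set a : 'I_(n z) | vtx n z a \in c].

(* the default [a] is never used: k steps along [c] lead back to level 0 *)
Definition level0_step (a : 'I_(n z)) : 'I_(n z) := untag a id (iter k nx (vtx n z a)).

Lemma vtx_level0_step a :
  a \in level0 -> vtx n z (level0_step a) = iter k nx (vtx n z a).
Proof.
rewrite inE => ac; have /eqP tk : tag (iter k nx (vtx n z a)) == z.
  by rewrite tag_iter_level0.
by rewrite /level0_step (untagE _ _ tk); apply: etaggedK.
Qed.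

Lemma level0_step_in : {in level0, forall a, level0_step a \in level0}.
Proof.
by move=> a aS; rewrite inE vtx_level0_step // mem_iter_next; rewrite inE in aS.
Qed.

Lemma mem_iter_level0_step q a : a \in level0 -> iter q level0_step a \in level0.
Proof. by elim: q => //= q IH /IH /level0_step_in. Qed.

Lemma level0_step_inj : {in level0 &, injective level0_step}.
Proof.
move=> a b aS bS /(congr1 (fun a => vtx n z a)).
by rewrite !vtx_level0_step // => /iter_next_inj /vtx_inj.
Qed.

Lemma vtx_iter_level0_step q a : a \in level0 ->
  vtx n z (iter q level0_step a) = iter (q * k)%N nx (vtx n z a).
Proof.
move=> aS; elim: q => //= q IH.
by rewrite vtx_level0_step ?mem_iter_level0_step // IH mulSn iterD.
Qed.

Lemma level0_step_transitive :
  {in level0 &, forall a b, exists q, b = iter q level0_step a}.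
Proof.
move=> a b aS bS; move: (aS) (bS); rewrite !inE => ac bc.
have [t _ vbE] := level0_iter ac erefl bc erefl.
by exists t; apply: vtx_inj; rewrite vtx_iter_level0_step.
Qed.

Section Enumeration.
Variables (a0 : 'I_(n z)) (a0S : a0 \in level0).

Let a0c : vtx n z a0 \in c. Proof. by move: a0S; rewrite inE. Qed.

Lemma level0_imset : level0 = [set iter t level0_step a0 | t : 'I_r].
Proof.
apply/setP => b; apply/idP/imsetP => [bS|[t _ ->]]; last exact: mem_iter_level0_step.
have bc : vtx n z b \in c by rewrite inE in bS.
have [t t_lt vbE] := level0_iter a0c erefl bc erefl.
by exists (Ordinal t_lt) => //; apply: vtx_inj; rewrite vtx_iter_level0_step.
Qed.

Lemma iter_level0_step_inj : injective (fun t : 'I_r => iter t level0_step a0).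
Proof.
have ltL (t : 'I_r) : (t * k < size c)%N by rewrite -ltn_divRL ?(dvdn_size a0c).
move=> t t' /(congr1 (fun a => vtx n z a)) /=; rewrite !vtx_iter_level0_step //.
move/(congr1 (findex nx (vtx n z a0))); rewrite !findex_iter ?order_next //.
by move/eqP; rewrite eqn_pmul2r // => /eqP /val_inj.
Qed.

Lemma card_level0 : #|level0| = r.
Proof. by rewrite level0_imset card_imset ?card_ord //; apply: iter_level0_step_inj. Qed.

Lemma prod_level0 :
  \prod_(a in level0) walk_weight A nx k (vtx n z a) = \prod_(v <- c) ew A v (nx v).
Proof.
rewrite level0_imset big_imset /=; last by move=> t t' _ _; apply: iter_level0_step_inj.
rewrite -(perm_big _ (perm_traject_next c_uniq a0c)).
rewrite -[X in traject _ _ X](divnK (dvdn_size a0c)) big_traject_blocks.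
by apply: eq_bigr => t _; rewrite vtx_iter_level0_step.
Qed.

End Enumeration.

Lemma det_level0_lt0 : c != [::] -> ~~ odd (r + neg_edges A c) ->
  \det (principal_submx level0 (chain_prod hk A)) < 0.
Proof.
move=> c_nonnil even; have [a0 a0c] := exists_level0 c_nonnil.
have a0S : a0 \in level0 by rewrite inE.
rewrite (det_principal_submx_cycle
  (d := fun a => walk_weight A nx k (vtx n z a)) a0S level0_step_in level0_step_inj
  level0_step_transitive); last first.
  by move=> a aS b; rewrite (chain_prod_entry ew_off_next) -vtx_level0_step // eq_Tagged.
rewrite (card_level0 a0S) (prod_level0 a0S) (prodr_sign_norm ew_next_neq0).
rewrite -/(neg_edges A c).
rewrite mulNr mulrA -exprD -signr_odd (negbTE even) mul1r oppr_lt0 big_seq.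
by apply: prodr_gt0 => v /ew_next_neq0; rewrite normr_gt0.
Qed.

End SingleCycle.

Theorem lemma5 (R : realType) (k : nat) (hk : (0 < k)%N) (n : 'I_k -> nat)
  (hn : forall j, (0 < n j)%N)
  (A : forall j : 'I_k, 'M[R]_(n j, n (ordS j)))
  (c : seq (vertex n))
  (hC : e_cycle A c)
  (hE : forall u v : vertex n, is_edge A u v = (u \in c) && (next c u == v)) :
  ~ P0_matrix (chain_prod hk A).
Proof.
case/andP: hC => /and3P[c_nonnil c_uniq _] even P0.
by have := P0 (level0 hk c); rewrite leNgt det_level0_lt0.
Qed.
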